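(* Let $\mathbf{B}$ be a complex $5$-dimensional nilpotent binary Leibniz algebra. Then $\mathbf{B}$ is a Leibniz algebra, or $\mathbf{B}$ is isomorphic to one of the following algebras, each given on a basis $e_1,\dots,e_5$ (all products of basis elements not listed are zero; $\alpha\in\mathbb{C}$): \begin{itemize} \item $\mathbf{B}_{01}$: $e_1e_2=e_3,\ e_2e_1=-e_3,\ e_3e_4=e_5,\ e_4e_3=-e_5$; \item $\mathbf{B}_{02}$: $e_1e_2=e_3,\ e_2e_1=-e_3,\ e_3e_4=e_5,\ e_4e_3=-e_5,\ e_4e_4=e_5$; \item $\mathbf{B}_{03}$: $e_1e_2=e_3,\ e_2e_1=-e_3,\ e_3e_4=e_5,\ e_4e_1=e_5,\ e_4e_3=-e_5$; \item $\mathbf{B}_{04}$: $e_1e_2=e_3,\ e_2e_1=-e_3,\ e_3e_4=e_5,\ e_4e_1=e_5,\ e_4e_3=-e_5,\ e_4e_4=e_5$; \item $\mathbf{B}_{05}$: $e_1e_2=e_3+e_5,\ e_2e_1=-e_3,\ e_3e_4=e_5,\ e_4e_3=-e_5$; \item $\mathbf{B}_{06}$: $e_1e_2=e_3+e_5,\ e_2e_1=-e_3,\ e_3e_4=e_5,\ e_4e_1=e_5,\ e_4e_3=-e_5$; \item $\mathbf{B}_{07}$: $e_1e_2=e_3+e_5,\ e_2e_1=-e_3,\ e_3e_4=e_5,\ e_4e_3=-e_5,\ e_4e_4=e_5$; \item $\mathbf{B}_{08}$: $e_1e_2=e_3+e_5,\ e_2e_1=-e_3,\ e_3e_4=e_5,\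 e_4e_1=e_5,\ e_4e_3=-e_5,\ e_4e_4=e_5$; \item $\mathbf{B}_{09}^{\alpha}$: $e_1e_2=e_3+e_5,\ e_2e_1=-e_3,\ e_3e_4=e_5,\ e_4e_1=e_5,\ e_4e_2=e_5,\ e_4e_3=-e_5,\ e_4e_4=\alpha e_5$; \item $\mathbf{B}_{10}$: $e_1e_1=e_5,\ e_1e_2=e_3,\ e_2e_1=-e_3,\ e_3e_4=e_5,\ e_4e_3=-e_5$; \item $\mathbf{B}_{11}$: $e_1e_1=e_5,\ e_1e_2=e_3,\ e_2e_1=-e_3,\ e_3e_4=e_5,\ e_4e_3=-e_5,\ e_4e_4=e_5$; \item $\mathbf{B}_{12}^{\alpha}$: $e_1e_1=e_5,\ e_1e_2=e_3,\ e_2e_1=-e_3,\ e_3e_4=e_5,\ e_4e_1=e_5,\ e_4e_3=-e_5,\ e_4e_4=\alpha e_5$; \item $\mathbf{B}_{13}$: $e_1e_1=e_5,\ e_1e_2=e_3,\ e_2e_1=-e_3,\ e_3e_4=e_5,\ e_4e_2=e_5,\ e_4e_3=-e_5$; \item $\mathbf{B}_{14}$: $e_1e_1=e_5,\ e_1e_2=e_3,\ e_2e_1=-e_3,\ e_3e_4=e_5,\ e_4e_2=e_5,\ e_4e_3=-e_5,\ e_4e_4=e_5$. \end{itemize}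
   Context: All algebras are over $\mathbb{C}$ and not necessarily associative. An algebra is a Leibniz algebra if it satisfies $(xy)z=(xz)y+x(yz)$ for all $x,y,z$. An algebra is a binary Leibniz algebra if every subalgebra generated by two elements is a Leibniz algebra. An algebra $A$ is nilpotent if there is $n$ such that every product of $n$ elements of $A$, with any arrangement of brackets, is zero. *)

From HB Require Import structures.
From mathcomp Require Import all_boot all_order all_algebra.
From mathcomp Require Import complex.
From mathcomp Require Import Rstruct.
Set Implicit Arguments. Unset Strict Implicit. Unset Printing Implicit Defensive.
Import Order.TTheory GRing.Theory Num.Theory.
Local Open Scope ring_scope.

Definition CC : fieldType := (Rdefinitions.R)[i].

Section Algebras.
Variable V : vectType CC.
Variable mul : V -> V -> V.

Definition bilinear_prod : Prop :=
  (forall x, linear (mul x)) /\ (forall y, linear (fun x => mul x y)).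

Definition leibniz_on (P : V -> Prop) : Prop :=
  forall x y z, P x -> P y -> P z ->
    mul (mul x y) z = mul (mul x z) y + mul x (mul y z).

Definition is_leibniz : Prop := leibniz_on (fun _ => True).

Definition subalg_closed (U : {vspace V}) : Prop :=
  forall u v, u \in U -> v \in U -> mul u v \in U.

(* the subalgebra generated by a and b: intersection of all subalgebras
   containing a and b *)
Definition gen2 (a b : V) (x : V) : Prop :=
  forall U : {vspace V}, a \in U -> b \in U -> subalg_closed U -> x \in U.

Definition binary_leibniz : Prop := forall a b, leibniz_on (gen2 a b).

Inductive prod_n : nat -> V -> Prop :=
| prod_leaf x : prod_n 1 x
| prod_node m k x y : prod_n m x -> prod_n k y -> prod_n (m + k) (mul x y).

Definition nilpotent_alg : Prop :=
  exists n, (0 < n)%N /\ forall x, prod_n n x -> x = 0.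

End Algebras.

(* Algebras on CC^5 = 'rV[CC]_5 given by structure constants on the standard
   basis e_1..e_5 (1-based). *)
Definition e (k : nat) : 'rV[CC]_5 := delta_mx 0 (inord k.-1).

(* table of nonzero products: (i, j, e_i e_j); unlisted products are 0 *)
Definition sc (l : seq (nat * nat * 'rV[CC]_5)) (i j : 'I_5) : 'rV[CC]_5 :=
  \sum_(t <- l | (t.1.1 == i.+1) && (t.1.2 == j.+1)) t.2.

Definition mulsc (c : 'I_5 -> 'I_5 -> 'rV[CC]_5) (x y : 'rV[CC]_5) : 'rV[CC]_5 :=
  \sum_(i < 5) \sum_(j < 5) (x 0 i * y 0 j) *: c i j.

Definition iso_to (V : vectType CC) (mul : V -> V -> V)
    (c : 'I_5 -> 'I_5 -> 'rV[CC]_5) : Prop :=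
  exists f : V -> 'rV[CC]_5,
    [/\ linear f, bijective f & forall x y, f (mul x y) = mulsc c (f x) (f y)].

Definition B01 := sc [:: (1,2, e 3); (2,1, - e 3); (3,4, e 5); (4,3, - e 5)].
Definition B02 := sc [:: (1,2, e 3); (2,1, - e 3); (3,4, e 5); (4,3, - e 5);
                         (4,4, e 5)].
Definition B03 := sc [:: (1,2, e 3); (2,1, - e 3); (3,4, e 5); (4,1, e 5);
                         (4,3, - e 5)].
Definition B04 := sc [:: (1,2, e 3); (2,1, - e 3); (3,4, e 5); (4,1, e 5);
                         (4,3, - e 5); (4,4, e 5)].
Definition B05 := sc [:: (1,2, e 3 + e 5); (2,1, - e 3); (3,4, e 5);
                         (4,3, - e 5)].
Definition B06 := sc [:: (1,2, e 3 + e 5); (2,1, - e 3); (3,4, e 5);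
                         (4,1, e 5); (4,3, - e 5)].
Definition B07 := sc [:: (1,2, e 3 + e 5); (2,1, - e 3); (3,4, e 5);
                         (4,3, - e 5); (4,4, e 5)].
Definition B08 := sc [:: (1,2, e 3 + e 5); (2,1, - e 3); (3,4, e 5);
                         (4,1, e 5); (4,3, - e 5); (4,4, e 5)].
Definition B09 (alpha : CC) :=
  sc [:: (1,2, e 3 + e 5); (2,1, - e 3); (3,4, e 5); (4,1, e 5);
         (4,2, e 5); (4,3, - e 5); (4,4, alpha *: e 5)].
Definition B10 := sc [:: (1,1, e 5); (1,2, e 3); (2,1, - e 3); (3,4, e 5);
                         (4,3, - e 5)].
Definition B11 := sc [:: (1,1, e 5); (1,2, e 3); (2,1, - e 3); (3,4, e 5);
                         (4,3, - e 5); (4,4, e 5)].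
Definition B12 (alpha : CC) :=
  sc [:: (1,1, e 5); (1,2, e 3); (2,1, - e 3); (3,4, e 5); (4,1, e 5);
         (4,3, - e 5); (4,4, alpha *: e 5)].
Definition B13 := sc [:: (1,1, e 5); (1,2, e 3); (2,1, - e 3); (3,4, e 5);
                         (4,2, e 5); (4,3, - e 5)].
Definition B14 := sc [:: (1,1, e 5); (1,2, e 3); (2,1, - e 3); (3,4, e 5);
                         (4,2, e 5); (4,3, - e 5); (4,4, e 5)].

From Pilot Require Import Defs.
From HB Require Import structures.
From mathcomp Require Import all_boot all_order all_algebra.
From mathcomp Require Import complex.
From mathcomp Require Import Rstruct ring zify.
From Stdlib Require Import Classical.
Set Implicit Arguments. Unset Strict Implicit. Unset Printing Implicit Defensive.
Import GRing.Theory Num.Theory.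
Local Open Scope ring_scope.

(* Let A^2 = AA and A^3 = A A^2 + A^2 A.  If dim A/A^2 <= 2 then, by
   nilpotency, A is generated by two elements, hence Leibniz.  Nilpotency also
   gives A^3 < A^2 and A^4 < A^3, and A^3 <> 0 because the Leibniz defect
   (xy)z - (xz)y - x(yz) lies in A^3.  So dim A^2 = 2, dim A^3 = 1, A^4 = 0, and
   in a basis e1, e2, e4 (complementing A^2), e3 (in A^2 but not in A^3),
   e5 (spanning A^3) the product is given by bilinear forms C, D and linear
   forms p, q on <e1, e2, e4>, with e3 e3 = 0 by binary Leibniz.  The defect
   becomes [C(x,y) q(z) - C(x,z) q(y) - C(y,z) p(x)] e5, and binary Leibniz
   says it vanishes on (x,x,z) and (x,z,z).  Unless it vanishes identically,
   this forces C alternating, p = -q and q nonzero on the radical of C, which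
   leads to a normal form e1 e2 = e3, e3 e4 = - e4 e3 = e5 decorated by a
   binary quadratic form m, a vector v and a scalar s; classifying (m, v, s)
   under GL_2 x C^* yields B01 - B14. *)

(* Indices are 0-based: [ok] and [ebase k] stand for the paper's e_(k+1). *)
Definition o0 : 'I_5 := @Ordinal 5 0 isT.
Definition o1 : 'I_5 := @Ordinal 5 1 isT.
Definition o2 : 'I_5 := @Ordinal 5 2 isT.
Definition o3 : 'I_5 := @Ordinal 5 3 isT.
Definition o4 : 'I_5 := @Ordinal 5 4 isT.

Definition ebase (k : nat) : 'rV[CC]_5 := \row_j (k == j :> nat)%:R.

Lemma e_ebase k : (k < 5)%N -> e k.+1 = ebase k.
Proof.
by move=> hk; apply/rowP => j; rewrite !mxE /= -val_eqE /= inordK // eq_sym.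
Qed.

Lemma sum5 (T : nmodType) (F : 'I_5 -> T) :
  \sum_(i < 5) F i = F o0 + F o1 + F o2 + F o3 + F o4.
Proof.
rewrite !big_ord_recl big_ord0 addr0 !addrA.
by congr (_ + _ + _ + _ + _); congr F; apply: val_inj.
Qed.

Lemma forall5 (P : 'I_5 -> Prop) :
  P o0 -> P o1 -> P o2 -> P o3 -> P o4 -> forall i, P i.
Proof.
move=> p0 p1 p2 p3 p4 [[|[|[|[|[|//]]]]] hi];
  [apply: (eq_ind _ P p0) | apply: (eq_ind _ P p1) | apply: (eq_ind _ P p2)
  | apply: (eq_ind _ P p3) | apply: (eq_ind _ P p4)]; exact: val_inj.
Qed.

Definition row5 (x0 x1 x2 x3 x4 : CC) : 'rV[CC]_5 :=
  \row_l (match nat_of_ord l with 0 => x0 | 1 => x1 | 2 => x2 | 3 => x3 | _ => x4 end).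

Lemma row5E x0 x1 x2 x3 x4 k : row5 x0 x1 x2 x3 x4 0 k =
  match nat_of_ord k with 0 => x0 | 1 => x1 | 2 => x2 | 3 => x3 | _ => x4 end.
Proof. by rewrite mxE. Qed.

Lemma row5_eq0 (x : 'rV[CC]_5) :
  x 0 o0 = 0 -> x 0 o1 = 0 -> x 0 o2 = 0 -> x 0 o3 = 0 -> x 0 o4 = 0 -> x = 0.
Proof.
move=> h0 h1 h2 h3 h4; apply/rowP; apply: forall5; by rewrite mxE.
Qed.

(* [twostep C D p q]: [ei ej = C_ij e3 + D_ij e5], [ei e3 = p_i e5],
   [e3 ej = q_j e5] for generators [ei, ej] in [e1, e2, e4]; all other
   products vanish.  [bform] and [lform] read such data on <e1, e2, e4>. *)
Definition gen_idx (i : 'I_5) : bool := (i != 2 :> nat) && (i != 4 :> nat).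

Definition twostep_e3 (C : 'I_5 -> 'I_5 -> CC) (i j : 'I_5) : CC :=
  if gen_idx i && gen_idx j then C i j else 0.

Definition twostep_e5 (D : 'I_5 -> 'I_5 -> CC) (p q : 'I_5 -> CC) (i j : 'I_5) : CC :=
  if gen_idx i && gen_idx j then D i j
  else if gen_idx i && (j == 2 :> nat) then p i
  else if (i == 2 :> nat) && gen_idx j then q j else 0.

Definition twostep C D p q (i j : 'I_5) : 'rV[CC]_5 :=
  twostep_e3 C i j *: ebase 2 + twostep_e5 D p q i j *: ebase 4.

Definition bform (C : 'I_5 -> 'I_5 -> CC) (x y : 'rV[CC]_5) : CC :=
    x 0 o0 * y 0 o0 * C o0 o0 + x 0 o0 * y 0 o1 * C o0 o1 + x 0 o0 * y 0 o3 * C o0 o3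
  + x 0 o1 * y 0 o0 * C o1 o0 + x 0 o1 * y 0 o1 * C o1 o1 + x 0 o1 * y 0 o3 * C o1 o3
  + x 0 o3 * y 0 o0 * C o3 o0 + x 0 o3 * y 0 o1 * C o3 o1 + x 0 o3 * y 0 o3 * C o3 o3.

Definition lform (p : 'I_5 -> CC) (x : 'rV[CC]_5) : CC :=
  x 0 o0 * p o0 + x 0 o1 * p o1 + x 0 o3 * p o3.

Lemma mulsc_span2 (a b : 'I_5 -> 'I_5 -> CC) (u w x y : 'rV[CC]_5) :
  mulsc (fun i j => a i j *: u + b i j *: w) x y =
  (\sum_i \sum_j x 0 i * y 0 j * a i j) *: u
  + (\sum_i \sum_j x 0 i * y 0 j * b i j) *: w.
Proof.
rewrite /mulsc !scaler_suml -big_split; apply: eq_bigr => i _.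
rewrite !scaler_suml -big_split; apply: eq_bigr => j _.
by rewrite scalerDr !scalerA.
Qed.

Lemma sum_twostep_e3 C (x y : 'rV[CC]_5) :
  \sum_i \sum_j x 0 i * y 0 j * twostep_e3 C i j = bform C x y.
Proof. by rewrite !sum5 /twostep_e3 /gen_idx /bform /=; ring. Qed.

Lemma sum_twostep_e5 D p q (x y : 'rV[CC]_5) :
  \sum_i \sum_j x 0 i * y 0 j * twostep_e5 D p q i j =
  bform D x y + lform p x * y 0 o2 + x 0 o2 * lform q y.
Proof. by rewrite !sum5 /twostep_e5 /gen_idx /bform /lform /=; ring. Qed.

Lemma mulsc_twostep C D p q x y :
  mulsc (twostep C D p q) x y =
  bform C x y *: ebase 2
  + (bform D x y + lform p x * y 0 o2 + x 0 o2 * lform q y) *: ebase 4.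
Proof.
by rewrite (mulsc_span2 (twostep_e3 C) (twostep_e5 D p q)) sum_twostep_e3 sum_twostep_e5.
Qed.

Section FormLinearity.
Variables (C : 'I_5 -> 'I_5 -> CC) (p : 'I_5 -> CC).

Lemma bformDl x x' y : bform C (x + x') y = bform C x y + bform C x' y.
Proof. by rewrite /bform !mxE; ring. Qed.
Lemma bformDr x y y' : bform C x (y + y') = bform C x y + bform C x y'.
Proof. by rewrite /bform !mxE; ring. Qed.
Lemma bformZl a x y : bform C (a *: x) y = a * bform C x y.
Proof. by rewrite /bform !mxE; ring. Qed.
Lemma bformZr a x y : bform C x (a *: y) = a * bform C x y.
Proof. by rewrite /bform !mxE; ring. Qed.
Lemma lformD x x' : lform p (x + x') = lform p x + lform p x'.
Proof. by rewrite /lform !mxE; ring. Qed.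
Lemma lformZ a x : lform p (a *: x) = a * lform p x.
Proof. by rewrite /lform !mxE; ring. Qed.

Lemma bform_ebasel (k : nat) y : (k == 2) || (k == 4) -> bform C (ebase k) y = 0.
Proof. by case/orP => /eqP ->; rewrite /bform !mxE /=; ring. Qed.
Lemma bform_ebaser (k : nat) x : (k == 2) || (k == 4) -> bform C x (ebase k) = 0.
Proof. by case/orP => /eqP ->; rewrite /bform !mxE /=; ring. Qed.
Lemma lform_ebase (k : nat) : (k == 2) || (k == 4) -> lform p (ebase k) = 0.
Proof. by case/orP => /eqP ->; rewrite /lform !mxE /=; ring. Qed.

Lemma bform0l y : bform C 0 y = 0.
Proof. by rewrite -(scale0r (0 : 'rV[CC]_5)) bformZl mul0r. Qed.
Lemma bform0r x : bform C x 0 = 0.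
Proof. by rewrite -(scale0r (0 : 'rV[CC]_5)) bformZr mul0r. Qed.
Lemma lform0 : lform p 0 = 0.
Proof. by rewrite -(scale0r (0 : 'rV[CC]_5)) lformZ mul0r. Qed.

Lemma lform_eq0_or : (forall v, lform p v = 0) \/ exists v, lform p v != 0.
Proof.
have [/and3P [/eqP p0 /eqP p1 /eqP p3] | ] := boolP [&& p o0 == 0, p o1 == 0 & p o3 == 0].
  by left => v; rewrite /lform p0 p1 p3; ring.
rewrite !negb_and => /or3P [] hp; right;
  [exists (row5 1 0 0 0 0) | exists (row5 0 1 0 0 0) | exists (row5 0 0 0 1 0)];
  by rewrite /lform !row5E /=; apply: contra hp => /eqP <-; apply/eqP; ring.
Qed.

End FormLinearity.

Definition defect C p q (x y z : 'rV[CC]_5) : CC :=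
  bform C x y * lform q z - bform C x z * lform q y - bform C y z * lform p x.

Lemma mulsc_twostep_defect C D p q x y z :
  let M := mulsc (twostep C D p q) in
  M (M x y) z - M (M x z) y - M x (M y z) = defect C p q x y z *: ebase 4.
Proof.
rewrite /= !mulsc_twostep !(bformDl, bformDr, bformZl, bformZr, lformD, lformZ).
rewrite !bform_ebasel ?bform_ebaser ?lform_ebase // !mxE /=.
by apply/rowP => l; rewrite /defect !mxE; case: l => [[|[|[|[|[|?]]]]] ?] /=; ring.
Qed.

Section MulscBilinear.
Variable c : 'I_5 -> 'I_5 -> 'rV[CC]_5.

Lemma mulscDZl a (x x' y : 'rV[CC]_5) :
  mulsc c (a *: x + x') y = a *: mulsc c x y + mulsc c x' y.
Proof.
rewrite /mulsc scaler_sumr -big_split; apply: eq_bigr => i _.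
rewrite scaler_sumr -big_split; apply: eq_bigr => j _.
by rewrite !mxE scalerA mulrDl mulrA scalerDl.
Qed.

Lemma mulscDZr a (x y y' : 'rV[CC]_5) :
  mulsc c x (a *: y + y') = a *: mulsc c x y + mulsc c x y'.
Proof.
rewrite /mulsc scaler_sumr -big_split; apply: eq_bigr => i _.
rewrite scaler_sumr -big_split; apply: eq_bigr => j _.
by rewrite !mxE scalerA mulrDr mulrCA scalerDl.
Qed.

Lemma mulsc0l y : mulsc c 0 y = 0.
Proof.
by rewrite /mulsc big1 // => i _; rewrite big1 // => j _; rewrite mxE mul0r scale0r.
Qed.

Lemma mulsc0r x : mulsc c x 0 = 0.
Proof.
by rewrite /mulsc big1 // => i _; rewrite big1 // => j _; rewrite mxE mulr0 scale0r.
Qed.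

Lemma mulsc_suml (I : finType) (a : I -> CC) (u : I -> 'rV[CC]_5) y :
  mulsc c (\sum_k a k *: u k) y = \sum_k a k *: mulsc c (u k) y.
Proof.
apply: (big_ind2 (fun X Y => mulsc c X y = Y)); first exact: mulsc0l.
  by move=> x1 x2 y1 y2 <- <-; rewrite -[x1]scale1r mulscDZl !scale1r.
by move=> k _; rewrite -[_ *: u k]addr0 mulscDZl mulsc0l addr0.
Qed.

Lemma mulsc_sumr (I : finType) (a : I -> CC) (u : I -> 'rV[CC]_5) x :
  mulsc c x (\sum_k a k *: u k) = \sum_k a k *: mulsc c x (u k).
Proof.
apply: (big_ind2 (fun X Y => mulsc c x X = Y)); first exact: mulsc0r.
  by move=> x1 x2 y1 y2 <- <-; rewrite -[x1]scale1r mulscDZr !scale1r.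
by move=> k _; rewrite -[_ *: u k]addr0 mulscDZr mulsc0r addr0.
Qed.

End MulscBilinear.

(* The rows of [G] are the new basis vectors, in the old coordinates. *)
Definition basis_change (c c' : 'I_5 -> 'I_5 -> 'rV[CC]_5) : Prop :=
  exists2 G : 'M[CC]_5, G \in unitmx &
    forall i j, mulsc c (row i G) (row j G) = c' i j *m G.

Lemma mulsc_mulmx c c' (G : 'M[CC]_5) :
  (forall i j, mulsc c (row i G) (row j G) = c' i j *m G) ->
  forall r s : 'rV[CC]_5, mulsc c (r *m G) (s *m G) = mulsc c' r s *m G.
Proof.
move=> hG r s; rewrite (mulmx_sum_row r G) (mulmx_sum_row s G) mulsc_suml.
rewrite [mulsc c' r s]/mulsc mulmx_suml; apply: eq_bigr => i _.
rewrite mulsc_sumr scaler_sumr mulmx_suml; apply: eq_bigr => j _.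
by rewrite hG scalerA -scalemxAl.
Qed.

Lemma iso_to_basis_change (V : vectType CC) (mul : V -> V -> V) c c' :
  iso_to mul c -> basis_change c c' -> iso_to mul c'.
Proof.
move=> [f [f_lin [g fK gK] f_mul]] [G uG hG].
exists (fun v => f v *m invmx G); split.
- by move=> a u v /=; rewrite f_lin mulmxDl scalemxAl.
- exists (fun r => g (r *m G)) => [v|r] /=; first by rewrite mulmxKV // fK.
  by rewrite gK mulmxK.
- move=> x y /=; rewrite f_mul -{1}(mulmxKV uG (f x)) -{1}(mulmxKV uG (f y)).
  by rewrite (mulsc_mulmx hG) mulmxK.
Qed.

Lemma unitmx_of_inj (G : 'M[CC]_5) :
  (forall r : 'rV[CC]_5, r *m G = 0 -> r = 0) -> G \in unitmx.
Proof.
move=> h; rewrite -row_free_unit -kermx_eq0; apply/eqP/row_matrixP => i.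
by rewrite row0; apply: h; rewrite -row_mul mulmx_ker row0.
Qed.

Lemma ebase_mulmx (k : 'I_5) (G : 'M[CC]_5) : ebase k *m G = row k G.
Proof.
rewrite rowE; congr (_ *m _); apply/rowP => j.
by rewrite !mxE eqxx /= eq_sym.
Qed.

Lemma basis_change_twostep C D p q C' D' p' q' (r : 'I_5 -> 'rV[CC]_5) mu nu la :
  (forall x : 'rV[CC]_5, x *m (\matrix_(i < 5) r i) = 0 -> x = 0) ->
  r o2 = mu *: ebase 2 + nu *: ebase 4 -> r o4 = la *: ebase 4 ->
  (forall i j, bform C (r i) (r j) = twostep_e3 C' i j * mu) ->
  (forall i j, bform D (r i) (r j) + lform p (r i) * r j 0 o2 + r i 0 o2 * lform q (r j)
               = twostep_e3 C' i j * nu + twostep_e5 D' p' q' i j * la) ->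
  basis_change (twostep C D p q) (twostep C' D' p' q').
Proof.
move=> r_inj r2 r4 hC hD; exists (\matrix_(i < 5) r i); first exact: unitmx_of_inj.
move=> i j; rewrite !rowK mulsc_twostep /twostep mulmxDl -!scalemxAl.
rewrite (ebase_mulmx o2) (ebase_mulmx o4) !rowK r2 r4 hC hD.
by rewrite !scalerDr !scalerA scalerDl addrA.
Qed.

Definition rows5 (r0 r1 r2 r3 r4 : 'rV[CC]_5) (i : 'I_5) : 'rV[CC]_5 :=
  match nat_of_ord i with 0 => r0 | 1 => r1 | 2 => r2 | 3 => r3 | _ => r4 end.

Lemma mulmx_rows5 (x : 'rV[CC]_5) r0 r1 r2 r3 r4 :
  x *m \matrix_(i < 5) rows5 r0 r1 r2 r3 r4 i =
  x 0 o0 *: r0 + x 0 o1 *: r1 + x 0 o2 *: r2 + x 0 o3 *: r3 + x 0 o4 *: r4.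
Proof. by rewrite mulmx_sum_row sum5 !rowK. Qed.

Lemma mulmx_rows5_coord (x : 'rV[CC]_5) r0 r1 r2 r3 r4 l :
  (x *m \matrix_(i < 5) rows5 r0 r1 r2 r3 r4 i) 0 l =
  x 0 o0 * r0 0 l + x 0 o1 * r1 0 l + x 0 o2 * r2 0 l + x 0 o3 * r3 0 l + x 0 o4 * r4 0 l.
Proof. by rewrite mulmx_rows5 !mxE. Qed.

Lemma mulf_eq0r (x y : CC) : y != 0 -> x * y = 0 -> x = 0.
Proof. by move=> hy /eqP; rewrite mulf_eq0 (negbTE hy) orbF => /eqP. Qed.

Definition nf_C (i j : 'I_5) : CC :=
  match nat_of_ord i, nat_of_ord j with 0, 1 => 1 | 1, 0 => -1 | _, _ => 0 end.
Definition nf_p (i : 'I_5) : CC := if nat_of_ord i == 3 then -1 else 0.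
Definition nf_q (i : 'I_5) : CC := if nat_of_ord i == 3 then 1 else 0.
Definition nf_D (m11 m12 m22 v1 v2 s : CC) (i j : 'I_5) : CC :=
  match nat_of_ord i, nat_of_ord j with
  | 0, 0 => m11 | 0, 1 => m12 | 1, 1 => m22 | 3, 0 => v1 | 3, 1 => v2 | 3, 3 => s
  | _, _ => 0 end.

(* [e1 e2 = e3 + m12 e5, e1 e1 = m11 e5, e2 e2 = m22 e5, e3 e4 = - e4 e3 = e5,
   e4 e1 = v1 e5, e4 e2 = v2 e5, e4 e4 = s e5]: [m] is a binary quadratic form. *)
Definition normal_form m11 m12 m22 v1 v2 s :=
  twostep nf_C (nf_D m11 m12 m22 v1 v2 s) nf_p nf_q.

(* Change of basis [e1' = a e1 + b e2], [e2' = c e1 + d e2], [e4' = t e4]. *)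
Lemma normal_form_change (m11 m12 m22 v1 v2 s a b c d t : CC) :
  a * d - b * c != 0 -> t != 0 ->
  let D := a * d - b * c in
  basis_change (normal_form m11 m12 m22 v1 v2 s)
    (normal_form ((a^+2 * m11 + a * b * m12 + b^+2 * m22) / (D * t))
       ((2 * a * c * m11 + (a * d + b * c) * m12 + 2 * b * d * m22) / (D * t))
       ((c^+2 * m11 + c * d * m12 + d^+2 * m22) / (D * t))
       ((a * v1 + b * v2) / D) ((c * v1 + d * v2) / D) (t * s / D)).
Proof.
move=> hD ht D; rewrite -/D in hD; have hDt : D * t != 0 by rewrite mulf_neq0.
pose w := - (a * c * m11 + b * c * m12 + b * d * m22).
apply: (@basis_change_twostep _ _ _ _ _ _ _ _
  (rows5 (row5 a b 0 0 0) (row5 c d 0 0 0) (row5 0 0 D 0 w) (row5 0 0 0 t 0)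
     (row5 0 0 0 0 (D * t))) D w (D * t)).
- move=> x hx; have hx_at l := congr1 (fun M : 'rV_5 => M 0 l) hx.
  have := hx_at o0; have := hx_at o1; have := hx_at o2; have := hx_at o3;
    have := hx_at o4.
  rewrite !mulmx_rows5_coord !row5E !mxE /= !(mulr0, addr0, add0r) => h4 h3 h2 h1 h0.
  have x2 : x 0 o2 = 0 by apply: (mulf_eq0r hD).
  have x3 : x 0 o3 = 0 by apply: (mulf_eq0r ht).
  have x4 : x 0 o4 = 0 by apply: (mulf_eq0r hDt); rewrite -h4 x2 mul0r add0r.
  have x0 : x 0 o0 = 0.
    apply: (mulf_eq0r hD); rewrite /D.
    by rewrite (_ : _ * _ = d * (x 0 o0 * a + x 0 o1 * c) - c * (x 0 o0 * b + x 0 o1 * d));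
      [rewrite h0 h1; ring | ring].
  have x1 : x 0 o1 = 0.
    apply: (mulf_eq0r hD); rewrite /D.
    by rewrite (_ : _ * _ = a * (x 0 o0 * b + x 0 o1 * d) - b * (x 0 o0 * a + x 0 o1 * c));
      [rewrite h0 h1; ring | ring].
  exact: row5_eq0.
- by apply/rowP; apply: forall5; rewrite !mxE /=; ring.
- by apply/rowP; apply: forall5; rewrite !mxE /=; ring.
- apply: forall5; apply: forall5;
    rewrite /rows5 /bform /twostep_e3 /gen_idx /nf_C !row5E /= /D; ring.
- apply: forall5; apply: forall5;
    rewrite /rows5 /bform /lform /twostep_e3 /twostep_e5 /gen_idx /nf_C /nf_D /nf_p /nf_q;
    rewrite !row5E /= /w; field; by rewrite ?hD ?ht.
Qed.

(* For [p = 0] the defect is [C(x,y) q(z) - C(x,z) q(y)]; polarizing its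
   vanishing on [(x, x, z)] in [x] gives the identity below. *)
Lemma defect_p0 C p q :
  (forall v, lform p v = 0) -> (forall x z, defect C p q x x z = 0) ->
  forall x y z, defect C p q x y z = 0.
Proof.
move=> p0 dxxz x y z; have [q0 | [w qw]] := lform_eq0_or q.
  by rewrite /defect !q0 !p0; ring.
apply: (mulf_eq0r (y := lform q w ^+ 2)); first by rewrite expf_neq0.
have -> : defect C p q x y z * lform q w ^+ 2 =
    lform q x * (- lform q y * defect C p q w w z + lform q z * defect C p q w w y)
  + lform q w * (- lform q z * (defect C p q (x + w) (x + w) y
                      - defect C p q x x y - defect C p q w w y)
                 + lform q y * (defect C p q (x + w) (x + w) z
                      - defect C p q x x z - defect C p q w w z)).
  by rewrite /defect !p0 !bformDl !bformDr !lformD; ring.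
by rewrite !dxxz; ring.
Qed.

Definition gdet (x y z : 'rV[CC]_5) : CC :=
    x 0 o0 * (y 0 o1 * z 0 o3 - y 0 o3 * z 0 o1)
  - x 0 o1 * (y 0 o0 * z 0 o3 - y 0 o3 * z 0 o0)
  + x 0 o3 * (y 0 o0 * z 0 o1 - y 0 o1 * z 0 o0).

Section AlternatingForm.
Variable C : 'I_5 -> 'I_5 -> CC.
Hypothesis C_alt : forall x, bform C x x = 0.

Lemma bformC x y : bform C y x = - bform C x y.
Proof.
apply/eqP; rewrite -addr_eq0 addrC; apply/eqP.
by have := C_alt (x + y); rewrite bformDl !bformDr !C_alt add0r addr0.
Qed.

Lemma alt_diag : [/\ C o0 o0 = 0, C o1 o1 = 0 & C o3 o3 = 0].
Proof.
have := C_alt (row5 1 0 0 0 0); have := C_alt (row5 0 1 0 0 0).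
have := C_alt (row5 0 0 0 1 0).
by rewrite /bform !row5E /= !(mulr0, mul0r, mulr1, mul1r, addr0, add0r) => ? ? ?.
Qed.

Lemma alt_offdiag :
  [/\ C o1 o0 = - C o0 o1, C o3 o0 = - C o0 o3 & C o3 o1 = - C o1 o3].
Proof.
have := bformC (row5 1 0 0 0 0) (row5 0 1 0 0 0).
have := bformC (row5 1 0 0 0 0) (row5 0 0 0 1 0).
have := bformC (row5 0 1 0 0 0) (row5 0 0 0 1 0).
by rewrite /bform !row5E /= !(mulr0, mul0r, mulr1, mul1r, addr0, add0r) => ? ? ?.
Qed.

(* Spans the radical of the alternating form [C] on <e1, e2, e4>. *)
Definition radical_vec : 'rV[CC]_5 := row5 (C o1 o3) (- C o0 o3) 0 (C o0 o1) 0.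

Lemma bform_radicall y : bform C radical_vec y = 0.
Proof.
case: alt_diag => h00 h11 h33; case: alt_offdiag => h10 h30 h31.
by rewrite /bform /radical_vec !row5E /= h00 h11 h33 h10 h30 h31; ring.
Qed.

Lemma bform_radicalr x : bform C x radical_vec = 0.
Proof. by rewrite bformC bform_radicall oppr0. Qed.

Lemma alt_eq0_or : (forall x y, bform C x y = 0) \/
  exists x y : 'rV[CC]_5, [/\ x 0 o2 = 0, y 0 o2 = 0 & bform C x y != 0].
Proof.
case: alt_diag => h00 h11 h33; case: alt_offdiag => h10 h30 h31.
have [/and3P [/eqP c01 /eqP c03 /eqP c13] | ] :=
  boolP [&& C o0 o1 == 0, C o0 o3 == 0 & C o1 o3 == 0].
  by left => x y; rewrite /bform h00 h11 h33 h10 h30 h31 c01 c03 c13; ring.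
rewrite !negb_and => /or3P [] hc; right;
  [exists (row5 1 0 0 0 0), (row5 0 1 0 0 0) | exists (row5 1 0 0 0 0), (row5 0 0 0 1 0)
  | exists (row5 0 1 0 0 0), (row5 0 0 0 1 0)];
  by rewrite /bform !row5E /=; split => //; apply: contra hc => /eqP <-; apply/eqP; ring.
Qed.

Variables p q : 'I_5 -> CC.

(* The defect on [(x, x, z)] is [- C(x,z) (p + q)(x)], and [C] is nonzero. *)
Lemma alt_defect_pq a b :
  (forall x z, defect C p q x x z = 0) -> bform C a b != 0 ->
  forall v, lform p v = - lform q v.
Proof.
move=> dxxz Cab.
have pq0 x z : bform C x z * (lform p x + lform q x) = 0.
  by rewrite -[RHS]oppr0 -(dxxz x z) /defect C_alt; ring.
move=> v; apply/eqP; rewrite -subr_eq0 opprK; apply/negPn/negP => pqv.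
have Cv z : bform C v z = 0 by apply: (mulf_eq0r pqv).
have [pqa | pqa] := eqVneq (lform p a + lform q a) 0.
  have := pq0 (a + v) b; rewrite bformDl Cv addr0 !lformD addrACA pqa add0r.
  by move/eqP; rewrite mulf_eq0 (negbTE Cab) (negbTE pqv).
by have /eqP := pq0 a b; rewrite mulf_eq0 (negbTE Cab) (negbTE pqa).
Qed.

Hypothesis pq : forall v, lform p v = - lform q v.

Lemma defect_alt x y z : defect C p q x y z = lform q radical_vec * gdet x y z.
Proof.
case: alt_diag => h00 h11 h33; case: alt_offdiag => h10 h30 h31.
rewrite /defect pq /gdet /radical_vec /bform /lform !row5E /=.
by rewrite h00 h11 h33 h10 h30 h31; ring.
Qed.

Lemma normalize_rows_inj (a b : 'rV[CC]_5) (al be d s0 : CC) :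
  lform q a = 0 -> lform q b = 0 -> bform C a b != 0 ->
  lform q radical_vec != 0 -> s0 != 0 ->
  forall x : 'rV[CC]_5,
  x *m \matrix_(i < 5) rows5 (a + al *: ebase 2) (b + be *: ebase 2)
         (bform C a b *: ebase 2 + d *: ebase 4) radical_vec (s0 *: ebase 4) i = 0 ->
  x = 0.
Proof.
move=> qa qb Cab qk s0n x; rewrite mulmx_rows5 => hx.
have := congr1 (bform C ^~ b) hx; have := congr1 (bform C a) hx.
have := congr1 (lform q) hx.
rewrite bform0l bform0r lform0 !(bformDl, bformDr, bformZl, bformZr, lformD, lformZ).
rewrite !bform_ebasel ?bform_ebaser ?lform_ebase // !C_alt bform_radicall.
rewrite bform_radicalr qa qb !(mulr0, addr0, add0r) => hq hCa hCb.
have x3 : x 0 o3 = 0 by apply: (mulf_eq0r qk).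
have x1 : x 0 o1 = 0 by apply: (mulf_eq0r Cab).
have x0 : x 0 o0 = 0 by apply: (mulf_eq0r Cab).
move: hx; rewrite x0 x1 x3 !scale0r !add0r => hx.
have := congr1 (fun M : 'rV_5 => M 0 o2) hx.
have := congr1 (fun M : 'rV_5 => M 0 o4) hx.
rewrite !mxE /= !(mulr0, mulr1, addr0, add0r) => h4 h2.
have x2 : x 0 o2 = 0 by apply: (mulf_eq0r Cab).
have x4 : x 0 o4 = 0 by apply: (mulf_eq0r s0n); rewrite -h4 x2 mul0r add0r.
exact: row5_eq0.
Qed.

Variable D : 'I_5 -> 'I_5 -> CC.

(* [a], [b], [radical_vec] become the new [e1], [e2], [e4]; the e3-components of
   [e1'], [e2'] kill the e5-components of [e1' e4'] and [e2' e4']. *)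
Lemma twostep_normalize (a b : 'rV[CC]_5) :
  a 0 o2 = 0 -> b 0 o2 = 0 -> lform q a = 0 -> lform q b = 0 ->
  bform C a b != 0 -> lform q radical_vec != 0 ->
  let k := radical_vec in let s0 := bform C a b * lform q k in
  basis_change (twostep C D p q)
    (normal_form (bform D a a / s0) ((bform D a b + bform D b a) / s0)
       (bform D b b / s0) ((bform D k a + bform D a k) / s0)
       ((bform D k b + bform D b k) / s0) (bform D k k / s0)).
Proof.
move=> a2 b2 qa qb Cab qk k s0; have s0n : s0 != 0 by rewrite mulf_neq0.
pose al := - bform D a k / lform q k; pose be := - bform D b k / lform q k.
apply: (@basis_change_twostep _ _ _ _ _ _ _ _
  (rows5 (a + al *: ebase 2) (b + be *: ebase 2)
     (bform C a b *: ebase 2 + (- bform D b a) *: ebase 4) k (s0 *: ebase 4))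
  (bform C a b) (- bform D b a) s0).
- exact: normalize_rows_inj.
- by [].
- by [].
- apply: forall5; apply: forall5;
    rewrite /rows5 /twostep_e3 /gen_idx /nf_C /=
      ?(bformDl, bformDr, bformZl, bformZr) ?bform_ebasel ?bform_ebaser //
      ?C_alt /k ?bform_radicall ?bform_radicalr ?(bformC a b); ring.
- have k2 : k 0 o2 = 0 by rewrite /k /radical_vec row5E.
  apply: forall5; apply: forall5;
    rewrite /rows5 /twostep_e3 /twostep_e5 /gen_idx /nf_C /nf_D /nf_p /nf_q /=
      ?(bformDl, bformDr, bformZl, bformZr, lformD, lformZ)
      ?bform_ebasel ?bform_ebaser ?lform_ebase // ?pq ?qa ?qb ?mxE /= ?a2 ?b2 ?k2
      /al /be /s0; field; by rewrite ?Cab ?qk.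
Qed.

Lemma exists_normal_form (x y : 'rV[CC]_5) :
  x 0 o2 = 0 -> y 0 o2 = 0 -> bform C x y != 0 -> lform q radical_vec != 0 ->
  exists m11 m12 m22 v1 v2 s,
    basis_change (twostep C D p q) (normal_form m11 m12 m22 v1 v2 s).
Proof.
move=> x2 y2 Cxy qk; set k := radical_vec in qk *.
pose a := x + (- (lform q x / lform q k)) *: k.
pose b := y + (- (lform q y / lform q k)) *: k.
do 6 eexists; apply: (@twostep_normalize a b).
- by rewrite /a !mxE x2 /=; ring.
- by rewrite /b !mxE y2 /=; ring.
- by rewrite /a lformD lformZ; field.
- by rewrite /b lformD lformZ; field.
- rewrite /a /b !(bformDl, bformDr, bformZl, bformZr) /k.
  by rewrite bform_radicall !bform_radicalr !(mulr0, addr0).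
- exact: qk.
Qed.

End AlternatingForm.

Lemma twostep_defect_cases C D p q :
  (forall x z, defect C p q x x z = 0) -> (forall x z, defect C p q x z z = 0) ->
  (forall x y z, defect C p q x y z = 0) \/
  exists m11 m12 m22 v1 v2 s,
    basis_change (twostep C D p q) (normal_form m11 m12 m22 v1 v2 s).
Proof.
move=> dxxz dxzz; have [p0 | [w pw]] := lform_eq0_or p.
  by left; apply: defect_p0.
have C_alt z : bform C z z = 0.
  apply: (mulf_eq0r pw); transitivity (- defect C p q w z z).
    by rewrite /defect; ring.
  by rewrite dxzz oppr0.
have [C0 | [x [y [x2 y2 Cxy]]]] := alt_eq0_or C_alt.
  by left => x y z; rewrite /defect !C0; ring.
have pq := alt_defect_pq C_alt dxxz Cxy.
have [qk | qk] := eqVneq (lform q (radical_vec C)) 0.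
  by left => x' y' z; rewrite (defect_alt C_alt pq) qk mul0r.
by right; apply: (exists_normal_form C_alt pq D x2 y2 Cxy qk).
Qed.

Ltac table_eq B := rewrite /B; apply: forall5; apply: forall5;
  rewrite /normal_form /twostep /twostep_e3 /twostep_e5 /gen_idx /nf_C /nf_D /nf_p /nf_q;
  rewrite /sc /= ?big_cons ?big_nil /= ?(e_ebase (isT : (2 < 5)%N))
    ?(e_ebase (isT : (4 < 5)%N)) ?scale1r ?scale0r ?addr0 ?add0r ?scaleN1r.

Lemma normal_form_B01 : normal_form 0 0 0 0 0 0 =2 B01.
Proof. by table_eq B01. Qed.
Lemma normal_form_B02 : normal_form 0 0 0 0 0 1 =2 B02.
Proof. by table_eq B02. Qed.
Lemma normal_form_B03 : normal_form 0 0 0 1 0 0 =2 B03.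
Proof. by table_eq B03. Qed.
Lemma normal_form_B04 : normal_form 0 0 0 1 0 1 =2 B04.
Proof. by table_eq B04. Qed.
Lemma normal_form_B05 : normal_form 0 1 0 0 0 0 =2 B05.
Proof. by table_eq B05. Qed.
Lemma normal_form_B06 : normal_form 0 1 0 1 0 0 =2 B06.
Proof. by table_eq B06. Qed.
Lemma normal_form_B07 : normal_form 0 1 0 0 0 1 =2 B07.
Proof. by table_eq B07. Qed.
Lemma normal_form_B08 : normal_form 0 1 0 1 0 1 =2 B08.
Proof. by table_eq B08. Qed.
Lemma normal_form_B09 al : normal_form 0 1 0 1 1 al =2 B09 al.
Proof. by table_eq B09. Qed.
Lemma normal_form_B10 : normal_form 1 0 0 0 0 0 =2 B10.
Proof. by table_eq B10. Qed.
Lemma normal_form_B11 : normal_form 1 0 0 0 0 1 =2 B11.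
Proof. by table_eq B11. Qed.
Lemma normal_form_B12 al : normal_form 1 0 0 1 0 al =2 B12 al.
Proof. by table_eq B12. Qed.
Lemma normal_form_B13 : normal_form 1 0 0 0 1 0 =2 B13.
Proof. by table_eq B13. Qed.
Lemma normal_form_B14 : normal_form 1 0 0 0 1 1 =2 B14.
Proof. by table_eq B14. Qed.

Lemma iso_to_eq2 (V : vectType CC) (mul : V -> V -> V) c c' :
  c =2 c' -> iso_to mul c -> iso_to mul c'.
Proof.
move=> cc' [f [f_lin f_bij f_mul]]; exists f; split => // x y.
by rewrite f_mul /mulsc; apply: eq_bigr => i _; apply: eq_bigr => j _; rewrite cc'.
Qed.

Lemma sqrtc_sqr (s : CC) : s != 0 -> exists2 r : CC, r != 0 & s = r ^+ 2.
Proof. by move=> sn; exists (sqrtc s); rewrite ?sqrtc_eq0 ?sqr_sqrtc. Qed.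

Section NormalFormClassification.
Variables (V : vectType CC) (mul : V -> V -> V).

Lemma iso_normal_form_change (m11 m12 m22 v1 v2 s a b c d t : CC)
    m11' m12' m22' v1' v2' s' :
  iso_to mul (normal_form m11 m12 m22 v1 v2 s) -> a * d - b * c != 0 -> t != 0 ->
  (a^+2 * m11 + a * b * m12 + b^+2 * m22) / ((a * d - b * c) * t) = m11' ->
  (2 * a * c * m11 + (a * d + b * c) * m12 + 2 * b * d * m22) / ((a * d - b * c) * t)
    = m12' ->
  (c^+2 * m11 + c * d * m12 + d^+2 * m22) / ((a * d - b * c) * t) = m22' ->
  (a * v1 + b * v2) / (a * d - b * c) = v1' ->
  (c * v1 + d * v2) / (a * d - b * c) = v2' ->
  t * s / (a * d - b * c) = s' ->
  iso_to mul (normal_form m11' m12' m22' v1' v2' s').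
Proof.
move=> h hD ht <- <- <- <- <- <-.
exact: iso_to_basis_change h (normal_form_change _ _ _ _ _ _ hD ht).
Qed.

Ltac nzsolve := rewrite ?(mulr1, mul1r, mul0r, mulr0, subr0, sub0r, oppr_eq0, mulrN,
  mulNr, opprK, invr_eq0, oner_neq0, mulf_neq0, pnatr_eq0) //.
Ltac fsolve := first [ done | by nzsolve | field; repeat (apply/andP; split); by nzsolve ].

Lemma classify_zero v1 v2 s : iso_to mul (normal_form 0 0 0 v1 v2 s) ->
  iso_to mul B01 \/ iso_to mul B02 \/ iso_to mul B03 \/ iso_to mul B04.
Proof.
move=> h.
have [/andP [/eqP v10 /eqP v20] | vn] := boolP ((v1 == 0) && (v2 == 0)).
  subst v1 v2; have [s0 | sn] := eqVneq s 0.
    by subst s; left; apply: iso_to_eq2 normal_form_B01 h.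
  right; left; apply: iso_to_eq2 normal_form_B02 _.
  by apply: (iso_normal_form_change (a:=1) (b:=0) (c:=0) (d:=1) (t:=s^-1) h); fsolve.
have [D [Dn h']] : exists D, D != 0 /\ iso_to mul (normal_form 0 0 0 1 0 (s / D)).
  have [v10 | v1n] := eqVneq v1 0.
    subst v1; have v2n : v2 != 0 by move: vn; rewrite eqxx.
    exists v2; split => //.
    by apply: (iso_normal_form_change (a:=0) (b:=1) (c:=-v2) (d:=0) (t:=1) h); fsolve.
  exists v1; split => //.
  by apply: (iso_normal_form_change (a:=1) (b:=0) (c:=-v2) (d:=v1) (t:=1) h); fsolve.
have [s0 | sn] := eqVneq s 0.
  by subst s; right; right; left; apply: iso_to_eq2 normal_form_B03 _; rewrite mul0r in h'.
right; right; right; apply: iso_to_eq2 normal_form_B04 _.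
by apply: (iso_normal_form_change (a:=1) (b:=0) (c:=0) (d:=1) (t:=D / s) h'); fsolve.
Qed.

Lemma classify_hyperbolic_v1 v1 s : v1 != 0 ->
  iso_to mul (normal_form 0 1 0 v1 0 s) -> iso_to mul B06 \/ iso_to mul B08.
Proof.
move=> v1n h; have [s0 | sn] := eqVneq s 0.
  subst s; left; apply: iso_to_eq2 normal_form_B06 _.
  by apply: (iso_normal_form_change (a:=1) (b:=0) (c:=0) (d:=v1) (t:=1) h); fsolve.
right; apply: iso_to_eq2 normal_form_B08 _.
by apply: (iso_normal_form_change (a:=s/v1) (b:=0) (c:=0) (d:=v1) (t:=1) h); fsolve.
Qed.

Lemma classify_hyperbolic v1 v2 s : iso_to mul (normal_form 0 1 0 v1 v2 s) ->
  iso_to mul B05 \/ iso_to mul B06 \/ iso_to mul B07 \/ iso_to mul B08 \/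
  exists alpha, iso_to mul (B09 alpha).
Proof.
move=> h; have [v10 | v1n] := eqVneq v1 0; have [v20 | v2n] := eqVneq v2 0.
- subst v1 v2; have [s0 | sn] := eqVneq s 0.
    by subst s; left; apply: iso_to_eq2 normal_form_B05 h.
  right; right; left; apply: iso_to_eq2 normal_form_B07 _.
  by apply: (iso_normal_form_change (a:=s) (b:=0) (c:=0) (d:=1) (t:=1) h); fsolve.
- subst v1; have h' : iso_to mul (normal_form 0 1 0 (- v2) 0 s).
    by apply: (iso_normal_form_change (a:=0) (b:=1) (c:=1) (d:=0) (t:=-1) h); fsolve.
  have := classify_hyperbolic_v1 _ h'; rewrite oppr_eq0 => /(_ v2n); tauto.
- by subst v2; have := classify_hyperbolic_v1 v1n h; tauto.
- right; right; right; right; exists (s / (v1 * v2)).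
  apply: iso_to_eq2 (normal_form_B09 _) _.
  by apply: (iso_normal_form_change (a:=v2) (b:=0) (c:=0) (d:=v1) (t:=1) h); fsolve.
Qed.

Lemma classify_square v1 v2 s : iso_to mul (normal_form 1 0 0 v1 v2 s) ->
  iso_to mul B10 \/ iso_to mul B11 \/ (exists alpha, iso_to mul (B12 alpha)) \/
  iso_to mul B13 \/ iso_to mul B14.
Proof.
move=> h; have [v20 | v2n] := eqVneq v2 0.
  subst v2; have [v10 | v1n] := eqVneq v1 0.
    subst v1; have [s0 | sn] := eqVneq s 0.
      by subst s; left; apply: iso_to_eq2 normal_form_B10 h.
    have [r rn sr] := sqrtc_sqr sn; subst s.
    right; left; apply: iso_to_eq2 normal_form_B11 _.
    by apply: (iso_normal_form_change (a:=1) (b:=0) (c:=0) (d:=r) (t:=r^-1) h); fsolve.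
  right; right; left; exists (s / v1 ^+ 2); apply: iso_to_eq2 (normal_form_B12 _) _.
  by apply: (iso_normal_form_change (a:=1) (b:=0) (c:=0) (d:=v1) (t:=v1^-1) h); fsolve.
have [s0 | sn] := eqVneq s 0.
  subst s; right; right; right; left; apply: iso_to_eq2 normal_form_B13 _.
  by apply: (iso_normal_form_change (a:=v2) (b:=-v1) (c:=0) (d:=1) (t:=v2) h); fsolve.
have [r rn sr] := sqrtc_sqr sn; subst s.
right; right; right; right; apply: iso_to_eq2 normal_form_B14 _.
by apply: (iso_normal_form_change (a:=v2) (b:=-v1) (c:=0) (d:=r) (t:=v2/r) h); fsolve.
Qed.

(* Up to GL_2 and scaling, a nonzero binary quadratic form is [X1^2] when its
   discriminant vanishes, and [X1 X2] otherwise. *)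
Lemma reduce_square m11 m12 m22 v1 v2 s :
  ~~ [&& m11 == 0, m12 == 0 & m22 == 0] -> m12 ^+ 2 - 4 * m11 * m22 = 0 ->
  iso_to mul (normal_form m11 m12 m22 v1 v2 s) ->
  exists v1' v2' s', iso_to mul (normal_form 1 0 0 v1' v2' s').
Proof.
move=> mn disc0 h; have [m110 | m11n] := eqVneq m11 0.
  subst m11; have m120 : m12 = 0.
    have : m12 ^+ 2 = 0 by rewrite -disc0; ring.
    by move/eqP; rewrite expf_eq0 => /andP [_ /eqP].
  subst m12; have m22n : m22 != 0 by move: mn; rewrite !eqxx.
  do 3 eexists.
  by apply: (iso_normal_form_change (a:=0) (b:=1) (c:=1) (d:=0) (t:=-m22) h);
    try reflexivity; fsolve.
have e22 : m22 = m12 ^+ 2 / (4 * m11).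
  apply: (mulIf (x := 4 * m11)); first by rewrite mulf_neq0 // pnatr_eq0.
  by rewrite mulfVK ?mulf_neq0 ?pnatr_eq0 // -[RHS]subr0 -disc0; ring.
subst m22; do 3 eexists.
by apply: (iso_normal_form_change (a:=1) (b:=0) (c:=-m12) (d:=2 * m11) (t:=2^-1) h);
  try reflexivity; fsolve.
Qed.

Lemma reduce_hyperbolic m11 m12 m22 v1 v2 s :
  m12 ^+ 2 - 4 * m11 * m22 != 0 ->
  iso_to mul (normal_form m11 m12 m22 v1 v2 s) ->
  exists v1' v2' s', iso_to mul (normal_form 0 1 0 v1' v2' s').
Proof.
move=> discn h; have [m110 | m11n] := eqVneq m11 0.
  subst m11; have m12n : m12 != 0.
    by apply: contraNneq discn => ->; rewrite ?(mul0r, mulr0, subr0, expr0n).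
  do 3 eexists.
  by apply: (iso_normal_form_change (a:=1) (b:=0) (c:=-m22) (d:=m12) (t:=m12) h);
    try reflexivity; fsolve.
have [r rn er] := sqrtc_sqr discn.
have e22 : m22 = (m12 ^+ 2 - r ^+ 2) / (4 * m11).
  apply: (mulIf (x := 4 * m11)); first by rewrite mulf_neq0 // pnatr_eq0.
  by rewrite mulfVK ?mulf_neq0 ?pnatr_eq0 // -er; ring.
subst m22.
have hD : (r - m12) / (2 * m11) * 1 - 1 * ((- r - m12) / (2 * m11)) = r / m11.
  by field; rewrite ?pnatr_eq0.
do 3 eexists.
by apply: (iso_normal_form_change (a:=(r - m12) / (2 * m11)) (b:=1)
  (c:=(- r - m12) / (2 * m11)) (d:=1) (t:=-r) h); try reflexivity; rewrite ?hD; fsolve.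
Qed.

Lemma normal_form_classification m11 m12 m22 v1 v2 s :
  iso_to mul (normal_form m11 m12 m22 v1 v2 s) ->
  iso_to mul B01 \/ iso_to mul B02 \/ iso_to mul B03 \/ iso_to mul B04
  \/ iso_to mul B05 \/ iso_to mul B06 \/ iso_to mul B07 \/ iso_to mul B08
  \/ (exists alpha : CC, iso_to mul (B09 alpha))
  \/ iso_to mul B10 \/ iso_to mul B11
  \/ (exists alpha : CC, iso_to mul (B12 alpha))
  \/ iso_to mul B13 \/ iso_to mul B14.
Proof.
move=> h; have [/and3P [/eqP m110 /eqP m120 /eqP m220] | mn] :=
  boolP [&& m11 == 0, m12 == 0 & m22 == 0].
  by subst; have := classify_zero h; tauto.
have [disc0 | discn] := eqVneq (m12 ^+ 2 - 4 * m11 * m22) 0.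
  have [v1' [v2' [s' h']]] := reduce_square mn disc0 h.
  by have := classify_square h'; tauto.
have [v1' [v2' [s' h']]] := reduce_hyperbolic discn h.
by have := classify_hyperbolic h'; tauto.
Qed.

End NormalFormClassification.

Section BilinearProduct.
Variables (V : vectType CC) (mul : V -> V -> V).
Hypothesis mul_bil : bilinear_prod mul.

Lemma bmulDZr x a u v : mul x (a *: u + v) = a *: mul x u + mul x v.
Proof. exact: mul_bil.1. Qed.
Lemma bmulDZl y a u v : mul (a *: u + v) y = a *: mul u y + mul v y.
Proof. exact: mul_bil.2. Qed.

Lemma bmulBr x u v : mul x (u - v) = mul x u - mul x v.
Proof. exact: (zmod_morphism_linear (mul_bil.1 x) u v). Qed.
Lemma bmulBl y u v : mul (u - v) y = mul u y - mul v y.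
Proof. exact: (zmod_morphism_linear (mul_bil.2 y) u v). Qed.
Lemma bmulr0 x : mul x 0 = 0.
Proof. by rewrite -[0 in LHS](subrr 0) bmulBr subrr. Qed.
Lemma bmul0r y : mul 0 y = 0.
Proof. by rewrite -[0 in LHS](subrr 0) bmulBl subrr. Qed.

Lemma bmul_suml (I : Type) (r : seq I) (a : I -> CC) (u : I -> V) y :
  mul (\sum_(i <- r) a i *: u i) y = \sum_(i <- r) a i *: mul (u i) y.
Proof.
elim: r => [|i r IH]; first by rewrite !big_nil bmul0r.
by rewrite !big_cons bmulDZl IH.
Qed.
Lemma bmul_sumr (I : Type) (r : seq I) (a : I -> CC) (u : I -> V) x :
  mul x (\sum_(i <- r) a i *: u i) = \sum_(i <- r) a i *: mul x (u i).
Proof.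
elim: r => [|i r IH]; first by rewrite !big_nil bmulr0.
by rewrite !big_cons bmulDZr IH.
Qed.

Definition leibniz_defect x y z := mul (mul x y) z - mul (mul x z) y - mul x (mul y z).

Lemma leibnizP : (forall x y z, leibniz_defect x y z = 0) -> is_leibniz mul.
Proof.
move=> h x y z _ _ _; apply/eqP; rewrite -subr_eq0 opprD addrA; apply/eqP; exact: h.
Qed.

Lemma gen2_l a b : gen2 mul a b a. Proof. by move=> U. Qed.
Lemma gen2_r a b : gen2 mul a b b. Proof. by move=> U. Qed.
Lemma gen2_mul a b x y :
  gen2 mul a b x -> gen2 mul a b y -> gen2 mul a b (mul x y).
Proof. by move=> hx hy U ha hb hU; apply: (hU _ _ (hx U ha hb hU) (hy U ha hb hU)). Qed.

Lemma binary_leibniz_defect a b x y z : binary_leibniz mul ->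
  gen2 mul a b x -> gen2 mul a b y -> gen2 mul a b z -> leibniz_defect x y z = 0.
Proof.
move=> binL hx hy hz; rewrite /leibniz_defect (binL a b x y z hx hy hz).
by rewrite [mul (mul x z) y + _]addrC addrK subrr.
Qed.

(* [in_power k x]: [x] lies in A^k, spanned by products of at least [k] factors. *)
Inductive in_power (k : nat) : V -> Prop :=
| in_power0 : in_power k 0
| in_powerS a p m x :
    (k <= m)%N -> prod_n mul m p -> in_power k x -> in_power k (a *: p + x).

Lemma in_powerD k x y : in_power k x -> in_power k y -> in_power k (x + y).
Proof.
elim=> [|a p m x' km hp _ IH] hy; first by rewrite add0r.
by rewrite -addrA; apply: in_powerS km hp (IH hy).
Qed.

Lemma in_powerZ k c x : in_power k x -> in_power k (c *: x).
Proof.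
elim=> [|a p m x' km hp _ IH]; first by rewrite scaler0; apply: in_power0.
by rewrite scalerDr scalerA; apply: in_powerS km hp IH.
Qed.

Lemma in_power_0 x : in_power 0 x.
Proof.
rewrite -[x]addr0 -[x]scale1r.
by apply: (@in_powerS 0 1 x 1) => //; [exact: prod_leaf | exact: in_power0].
Qed.

Lemma in_power_mulr k x y : in_power k y -> in_power k.+1 (mul x y).
Proof.
elim=> [|a p m y' km hp _ IH]; first by rewrite bmulr0; apply: in_power0.
rewrite bmulDZr; apply: (@in_powerS _ a (mul x p) (1 + m)) => //.
exact: prod_node (prod_leaf _ x) hp.
Qed.

Lemma in_power_mull k x y : in_power k y -> in_power k.+1 (mul y x).
Proof.
elim=> [|a p m y' km hp _ IH]; first by rewrite bmul0r; apply: in_power0.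
rewrite bmulDZl; apply: (@in_powerS _ a (mul p x) (m + 1)) => //; first by rewrite addn1.
exact: prod_node hp (prod_leaf _ x).
Qed.

Lemma in_power_span k (s : seq V) : {in s, forall v, in_power k v} ->
  forall x, x \in <<s>>%VS -> in_power k x.
Proof.
elim: s => [|v s IH] hs x; first by rewrite span_nil memv0 => /eqP ->; apply: in_power0.
rewrite span_cons => /memv_addP [u /vlineP [c ->] [w hw ->]].
apply: in_powerD; first by apply/in_powerZ/hs; rewrite inE eqxx.
by apply: IH => // v' hv'; apply: hs; rewrite inE hv' orbT.
Qed.

Lemma prod_n_gt0 m x : prod_n mul m x -> (0 < m)%N.
Proof. by elim=> // i j y z _ hi _ hj; rewrite addn_gt0 hi. Qed.

Lemma prod_n_le m x : prod_n mul m x -> forall n, (0 < n <= m)%N -> prod_n mul n x.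
Proof.
elim=> [y|i j y z hy IHy hz IHz] n /andP [n0 nm].
  by rewrite (_ : n = 1%N); [exact: prod_leaf | lia].
have [->|n1] := eqVneq n 1%N; first exact: prod_leaf.
have i0 := prod_n_gt0 hy; have j0 := prod_n_gt0 hz.
have [ni | ni] := leqP n.-1 i.
  rewrite (_ : n = n.-1 + 1)%N; last by lia.
  by apply: prod_node; [apply: IHy | apply: IHz]; apply/andP; split; lia.
rewrite (_ : n = i + (n - i))%N; last by lia.
by apply: prod_node; [apply: IHy | apply: IHz]; apply/andP; split; lia.
Qed.

Lemma nilpotent_in_power : nilpotent_alg mul ->
  exists N, forall x, in_power N x -> x = 0.
Proof.
case=> N [N0 hN]; exists N => x.
elim=> [//|a p m x' Nm hp _ ->].
by rewrite (hN p (prod_n_le hp _)) ?scaler0 ?addr0 // N0 Nm.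
Qed.

Definition prodsp (X Y : {vspace V}) : {vspace V} :=
  <<allpairs mul (vbasis X) (vbasis Y)>>%VS.

Lemma mem_prodsp (X Y : {vspace V}) x y :
  x \in X -> y \in Y -> mul x y \in prodsp X Y.
Proof.
move=> hx hy; rewrite (coord_vbasis hx) (coord_vbasis hy) bmul_suml.
apply: memv_suml => i _; rewrite bmul_sumr memvZ //.
apply: memv_suml => j _; apply/memvZ/memv_span.
by apply: allpairs_f; apply: mem_nth; rewrite size_tuple.
Qed.

Lemma prodsp_subv (X Y Z : {vspace V}) :
  (forall x y, x \in X -> y \in Y -> mul x y \in Z) -> (prodsp X Y <= Z)%VS.
Proof.
move=> h; apply/span_subvP => v /allpairsP [[x y] /= [hx hy ->]].
by apply: h; apply: vbasis_mem.
Qed.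

Lemma in_power_prodspl k (X Y : {vspace V}) : {in X, forall x, in_power k x} ->
  {in prodsp X Y, forall v, in_power k.+1 v}.
Proof.
move=> h; apply: in_power_span => _ /allpairsP [[x y] /= [hx hy ->]].
by apply/in_power_mull/h; apply: vbasis_mem.
Qed.

Lemma in_power_prodspr k (X Y : {vspace V}) : {in Y, forall y, in_power k y} ->
  {in prodsp X Y, forall v, in_power k.+1 v}.
Proof.
move=> h; apply: in_power_span => _ /allpairsP [[x y] /= [hx hy ->]].
by apply/in_power_mulr/h; apply: vbasis_mem.
Qed.

Lemma nilpotent_subv_eq0 (X : {vspace V}) : nilpotent_alg mul ->
  (X <= prodsp fullv X + prodsp X fullv)%VS -> X = 0%VS.
Proof.
move=> nil sX; have [N hN] := nilpotent_in_power nil.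
have X_pow k : {in X, forall x, in_power k x}.
  elim: k => [x _|k IH x /(subvP sX) /memv_addP [u hu [w hw ->]]].
    exact: in_power_0.
  by apply: in_powerD; [exact: (in_power_prodspr IH hu) | exact: (in_power_prodspl IH hw)].
by apply/vspaceP => x; rewrite memv0; apply/idP/eqP => [/X_pow/hN | ->]; rewrite ?mem0v.
Qed.

Definition approx k (U : {vspace V}) w := exists2 u, u \in U & in_power k (w - u).

Lemma approx_span k U (t : seq V) : {in t, forall e, approx k U e} ->
  forall w, w \in <<t>>%VS -> approx k U w.
Proof.
elim: t => [|e t IH] ht w.
  rewrite span_nil memv0 => /eqP ->.
  by exists 0; rewrite ?mem0v ?subr0 //; apply: in_power0.
rewrite span_cons => /memv_addP [_ /vlineP [c ->] [w' hw' ->]].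
have [ue hue de] := ht e (mem_head e t).
have [u' hu' d'] := IH (fun e' he' => ht e' (@mem_behead _ (e :: t) e' he')) w' hw'.
exists (c *: ue + u'); first by rewrite memvD // memvZ.
rewrite opprD addrACA -scalerBr.
by apply: in_powerD => //; apply: in_powerZ.
Qed.

Lemma approx_mul k U x y : Defs.subalg_closed mul U ->
  approx k U x -> approx k U y -> approx k.+1 U (mul x y).
Proof.
move=> hU [u1 hu1 d1] [u2 hu2 d2]; exists (mul u1 u2); first exact: hU.
have -> : mul x y - mul u1 u2 = mul x (y - u2) + mul (x - u1) u2.
  by rewrite bmulBr bmulBl addrA subrK.
by apply: in_powerD; [apply: in_power_mulr | apply: in_power_mull].
Qed.

Lemma nilpotent_gen2 a b : nilpotent_alg mul ->
  (fullv <= <<[:: a; b]>> + prodsp fullv fullv)%VS -> forall x, gen2 mul a b x.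
Proof.
move=> nil hfull x U ha hb hU; have [N hN] := nilpotent_in_power nil.
have sabU : (<<[:: a; b]>> <= U)%VS.
  by apply/span_subvP => v; rewrite !inE => /orP [] /eqP ->.
suff /(_ N x) [u hu /hN /eqP] : forall k y, approx k U y.
  by rewrite subr_eq0 => /eqP ->.
elim=> [y|k IH y]; first by exists 0; [exact: mem0v | exact: in_power_0].
have /memv_addP [s hs [w hw ->]] := subvP hfull y (memvf y).
have [u hu hwu] : approx k.+1 U w.
  apply: approx_span hw => _ /allpairsP [[y1 z1] /= [_ _ ->]].
  exact: approx_mul hU (IH y1) (IH z1).
exists (s + u); first by rewrite memvD // (subvP sabU).
by rewrite opprD addrACA subrr add0r.
Qed.

End BilinearProduct.

Lemma twostep_of_table (c : 'I_5 -> 'I_5 -> 'rV[CC]_5) :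
  (forall i j, c i j = c i j 0 o2 *: ebase 2 + c i j 0 o4 *: ebase 4) ->
  (forall i, c i o2 0 o2 = 0) -> (forall j, c o2 j 0 o2 = 0) -> c o2 o2 = 0 ->
  (forall i, c i o4 = 0) -> (forall j, c o4 j = 0) ->
  c =2 twostep (fun i j => c i j 0 o2) (fun i j => c i j 0 o4)
               (fun i => c i o2 0 o4) (fun j => c o2 j 0 o4).
Proof.
move=> c_span c_2 c2_ c22 c_4 c4_.
apply: forall5; apply: forall5; rewrite /twostep /twostep_e3 /twostep_e5 /gen_idx /=;
  rewrite ?c22 ?c_4 ?c4_ ?scale0r ?addr0 //;
  by rewrite {1}c_span ?c_2 ?c2_ ?scale0r ?add0r.
Qed.

Lemma linear_map0 (U W : lmodType CC) (f : U -> W) : linear f -> f 0 = 0.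
Proof. by move=> f_lin; rewrite -[0 in LHS](subrr 0) (zmod_morphism_linear f_lin) subrr. Qed.

Section Coordinates.
Variables (V : vectType CC) (mul : V -> V -> V).
Hypothesis mul_bil : bilinear_prod mul.

Definition coords (X : 5.-tuple V) (v : V) : 'rV[CC]_5 := \row_i coord X i v.

Lemma coordsDZ X a u v : coords X (a *: u + v) = a *: coords X u + coords X v.
Proof. by apply/rowP => i; rewrite !mxE linearP. Qed.

Lemma coords0 X : coords X 0 = 0.
Proof. by apply/rowP => i; rewrite !mxE linear0. Qed.

Lemma coordsZ X a v : coords X (a *: v) = a *: coords X v.
Proof. by apply/rowP => i; rewrite !mxE linearZ. Qed.

Lemma coords_sumZ X (I : Type) (r : seq I) (a : I -> CC) (u : I -> V) :
  coords X (\sum_(i <- r) a i *: u i) = \sum_(i <- r) a i *: coords X (u i).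
Proof.
elim: r => [|i r IH]; first by rewrite !big_nil coords0.
by rewrite !big_cons coordsDZ IH.
Qed.

Lemma coords_basis (X : 5.-tuple V) (i : 'I_5) : free X -> coords X X`_i = ebase i.
Proof. by move=> Xfree; apply/rowP => j; rewrite !mxE coord_free // eq_sym. Qed.

Lemma iso_coords (X : 5.-tuple V) : basis_of fullv X ->
  iso_to mul (fun i j => coords X (mul X`_i X`_j)).
Proof.
move=> Xbasis; have Xfree := basis_free Xbasis.
have Xspan v : v = \sum_(i < 5) coord X i v *: X`_i.
  by apply: coord_span; rewrite (span_basis Xbasis) memvf.
exists (coords X); split.
- by move=> a u v; rewrite coordsDZ.
- exists (fun r : 'rV[CC]_5 => \sum_(i < 5) r 0 i *: X`_i) => [v|r].
    by rewrite [RHS]Xspan; apply: eq_bigr => i _; rewrite mxE.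
  by apply/rowP => j; rewrite mxE coord_sum_free.
- move=> x y; rewrite {1}(Xspan x) {1}(Xspan y) bmul_suml // coords_sumZ /mulsc.
  apply: eq_bigr => i _; rewrite bmul_sumr // coords_sumZ scaler_sumr.
  by apply: eq_bigr => j _; rewrite !mxE scalerA.
Qed.

Lemma leibniz_defect_twostep C D p q (f : V -> 'rV[CC]_5) :
  linear f -> (forall x y, f (mul x y) = mulsc (twostep C D p q) (f x) (f y)) ->
  forall x y z, f (leibniz_defect mul x y z) = defect C p q (f x) (f y) (f z) *: ebase 4.
Proof.
move=> f_lin f_mul x y z.
by rewrite /leibniz_defect !(zmod_morphism_linear f_lin) !f_mul mulsc_twostep_defect.
Qed.

Lemma scale_ebase4_eq0 (a : CC) : a *: ebase 4 = 0 -> a = 0.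
Proof. by move/rowP/(_ o4); rewrite !mxE /= mulr1. Qed.

Lemma twostep_binary_defect C D p q :
  iso_to mul (twostep C D p q) -> binary_leibniz mul ->
  (forall x z, defect C p q x x z = 0) /\ (forall x z, defect C p q x z z = 0).
Proof.
move=> [f [f_lin [g fK gK] f_mul]] binL.
have defect_g r s t : leibniz_defect mul (g r) (g s) (g t) = 0 ->
    defect C p q r s t = 0.
  by move=> h; apply: scale_ebase4_eq0; rewrite -{1}[r]gK -{1}[s]gK -{1}[t]gK
    -(leibniz_defect_twostep f_lin f_mul) h (linear_map0 f_lin).
split=> x z; apply: defect_g.
  by apply: (binary_leibniz_defect binL); [apply: gen2_l | apply: gen2_l | apply: gen2_r].
by apply: (binary_leibniz_defect binL); [apply: gen2_l | apply: gen2_r | apply: gen2_r].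
Qed.

Lemma twostep_leibniz C D p q : iso_to mul (twostep C D p q) ->
  (forall x y z, defect C p q x y z = 0) -> is_leibniz mul.
Proof.
move=> [f [f_lin [g fK gK] f_mul]] h; apply: leibnizP => x y z.
apply: (can_inj fK).
by rewrite (leibniz_defect_twostep f_lin f_mul) h scale0r (linear_map0 f_lin).
Qed.

Lemma iso_twostep_of_basis (X : 5.-tuple V) : basis_of fullv X ->
  (forall i j, mul X`_i X`_j \in (<[X`_o2]> + <[X`_o4]>)%VS) ->
  (forall i, mul X`_i X`_o2 \in <[X`_o4]>%VS) ->
  (forall j, mul X`_o2 X`_j \in <[X`_o4]>%VS) ->
  mul X`_o2 X`_o2 = 0 -> (forall i, mul X`_i X`_o4 = 0) ->
  (forall j, mul X`_o4 X`_j = 0) ->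
  exists C D p q, iso_to mul (twostep C D p q).
Proof.
move=> Xbasis sq l2 r2 X22 l4 r4; have Xfree := basis_free Xbasis.
have coords24 v : v \in (<[X`_o2]> + <[X`_o4]>)%VS ->
    coords X v = coords X v 0 o2 *: ebase 2 + coords X v 0 o4 *: ebase 4.
  case/memv_addP => _ /vlineP [a ->] [_ /vlineP [b ->] ->].
  rewrite coordsDZ coordsZ !coords_basis // !mxE /=.
  by congr (_ *: _ + _ *: _); ring.
have coords4 v : v \in <[X`_o4]>%VS -> coords X v 0 o2 = 0.
  by case/vlineP => b ->; rewrite coordsZ coords_basis // !mxE /= mulr0.
do 4 eexists; apply: (iso_to_eq2 _ (iso_coords Xbasis)).
apply: twostep_of_table.
- by move=> i j; apply: coords24.
- by move=> i; apply: coords4.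
- by move=> j; apply: coords4.
- by rewrite X22 coords0.
- by move=> i; rewrite l4 coords0.
- by move=> j; rewrite r4 coords0.
Qed.

End Coordinates.

Lemma eq_line_addv (V : vectType CC) (U W : {vspace V}) v :
  (U <= W)%VS -> \dim W = (\dim U).+1 -> v \in W -> v \notin U -> W = (<[v]> + U)%VS.
Proof.
move=> sUW dimW vW vU; apply/eqP; rewrite eq_sym eqEdim subv_add -memvE vW sUW dimW /=.
by rewrite (ltn_leqif (dimv_leqif_sup (addvSr _ _))) subv_add -memvE (negbTE vU).
Qed.

Lemma subv_span_vbasis (V : vectType CC) (W : {vspace V}) n : (\dim W <= n)%N ->
  (W <= <<[seq (vbasis W)`_i | i <- iota 0 n]>>)%VS.
Proof.
move=> dimW; rewrite -{1}(span_basis (vbasisP W)); apply/span_subvP => v hv.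
rewrite -(nth_index 0 hv); apply/memv_span/mapP; exists (index v (vbasis W)) => //.
by rewrite mem_iota add0n (leq_trans _ dimW) // -{2}(size_tuple (vbasis W)) index_mem.
Qed.

Section FiveDimensional.
Variables (V : vectType CC) (mul : V -> V -> V).
Hypotheses (mul_bil : bilinear_prod mul) (nil : nilpotent_alg mul).
Hypothesis binL : binary_leibniz mul.

Local Notation square := (prodsp mul fullv fullv).
Local Notation cube := (prodsp mul fullv square + prodsp mul square fullv)%VS.

Lemma mul_square x y : mul x y \in square.
Proof. exact: (mem_prodsp mul_bil (memvf x) (memvf y)). Qed.

Lemma mul_cubel x v : v \in square -> mul x v \in cube.
Proof. by move=> hv; apply/(subvP (addvSl _ _))/(mem_prodsp mul_bil (memvf x) hv). Qed.

Lemma mul_cuber x v : v \in square -> mul v x \in cube.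
Proof. by move=> hv; apply/(subvP (addvSr _ _))/(mem_prodsp mul_bil hv (memvf x)). Qed.

Lemma cube_subv_square : (cube <= square)%VS.
Proof.
by rewrite subv_add; apply/andP; split; apply: prodsp_subv => x y _ _; apply: mul_square.
Qed.

Lemma leibniz_defect_cube x y z : leibniz_defect mul x y z \in cube.
Proof.
by rewrite /leibniz_defect; do 2?apply: memvB;
  [apply: mul_cuber | apply: mul_cuber | apply: mul_cubel]; apply: mul_square.
Qed.

Lemma leibniz_of_dim_square : (\dim {:V} <= \dim square + 2)%N -> is_leibniz mul.
Proof.
move=> dim_sq; pose W := (square^C)%VS.
have dimW : (\dim W <= 2)%N by rewrite dimv_compl; lia.
pose a := (vbasis W)`_0; pose b := (vbasis W)`_1.
have sW : (W <= <<[:: a; b]>>)%VS by apply: (subv_span_vbasis dimW).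
have gen x : gen2 mul a b x.
  apply: (nilpotent_gen2 mul_bil nil); apply: subv_trans (addvS sW (subvv _)).
  by rewrite addvC addv_complf.
by move=> x y z _ _ _; exact: (binL (gen x) (gen y) (gen z)).
Qed.

Lemma cube_neq0 : ~ is_leibniz mul -> cube != 0%VS.
Proof.
move=> NL; apply/eqP => cube0; apply: NL; apply: leibnizP => x y z.
by apply/eqP; rewrite -memv0 -cube0 leibniz_defect_cube.
Qed.

Lemma square_not_subv_cube : ~ is_leibniz mul -> ~~ (square <= cube)%VS.
Proof.
move=> NL; apply/negP => /(nilpotent_subv_eq0 mul_bil nil) square0.
by move: (cube_neq0 NL); rewrite -subv0 -square0 cube_subv_square.
Qed.

Lemma dim_square_cube : \dim {:V} = 5 -> ~ is_leibniz mul ->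
  \dim square = 2 /\ \dim cube = 1.
Proof.
move=> dimV NL.
have : (\dim cube < \dim square)%N.
  by rewrite (ltn_leqif (dimv_leqif_sup cube_subv_square)) square_not_subv_cube.
have : (\dim square <= 2)%N.
  by rewrite leqNgt; apply/negP => h; apply: NL; apply: leibniz_of_dim_square; lia.
have : (0 < \dim cube)%N by rewrite lt0n dimv_eq0 cube_neq0.
lia.
Qed.

Lemma cube_annihilator : \dim cube = 1 ->
  forall x w, w \in cube -> mul x w = 0 /\ mul w x = 0.
Proof.
move=> dim_cube x w hw.
pose fourth := (prodsp mul fullv cube + prodsp mul cube fullv)%VS.
have fourth_cube : (fourth <= cube)%VS.
  rewrite subv_add; apply/andP; split; apply: prodsp_subv.
    by move=> u v _ /(subvP cube_subv_square); apply: mul_cubel.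
  by move=> u v /(subvP cube_subv_square) hu _; apply: mul_cuber.
have fourth0 : fourth = 0%VS.
  suff : (\dim fourth < \dim cube)%N by rewrite dim_cube ltnS leqn0 dimv_eq0 => /eqP.
  rewrite (ltn_leqif (dimv_leqif_sup fourth_cube)); apply/negP.
  by move/(nilpotent_subv_eq0 mul_bil nil) => cube0; move: dim_cube; rewrite cube0 dimv0.
split; apply/eqP; rewrite -memv0 -fourth0.
  by apply: (subvP (addvSl _ _)); exact: (mem_prodsp mul_bil (memvf x) hw).
by apply: (subvP (addvSr _ _)); exact: (mem_prodsp mul_bil hw (memvf x)).
Qed.

Lemma twostep_model : \dim {:V} = 5 -> ~ is_leibniz mul ->
  exists C D p q, iso_to mul (twostep C D p q).
Proof.
move=> dimV NL; have [dim_sq dim_cube] := dim_square_cube dimV NL.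
have ann := cube_annihilator dim_cube.
have [x1 [x2 e3_cube]] : exists x1 x2, mul x1 x2 \notin cube.
  have : ~~ all (fun v => v \in cube) (allpairs mul (vbasis {:V}) (vbasis {:V})).
    by apply: contra (square_not_subv_cube NL) => /allP h; apply/span_subvP.
  by case/allPn => _ /allpairsP [[y z] /= [_ _ ->]] hn; exists y, z.
set e3 := mul x1 x2; have e3_sq : e3 \in square by apply: mul_square.
have e3e3 : mul e3 e3 = 0.
  have : leibniz_defect mul x1 x2 e3 = 0.
    apply: (binary_leibniz_defect binL); [apply: gen2_l | apply: gen2_r |].
    by apply: gen2_mul; [apply: gen2_l | apply: gen2_r].
  rewrite /leibniz_defect -/e3 (ann x2 _ (mul_cubel x1 e3_sq)).2.
  by rewrite (ann x1 _ (mul_cubel x2 e3_sq)).1 !subr0.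
pose e5 := vpick cube; have e5_cube : e5 \in cube by apply: memv_pick.
have cube_e5 : cube = <[e5]>%VS.
  rewrite [LHS](@eq_line_addv _ 0%VS _ e5) ?addv0 ?sub0v ?dimv0 ?memv0 //.
  by rewrite vpick0 -dimv_eq0 dim_cube.
have sq_e35 : square = (<[e3]> + <[e5]>)%VS.
  by rewrite -cube_e5; apply: eq_line_addv; rewrite ?cube_subv_square ?dim_sq ?dim_cube.
pose W := (square^C)%VS; have dimW : (\dim W <= 3)%N by rewrite dimv_compl dimV dim_sq.
pose X := [tuple (vbasis W)`_0; (vbasis W)`_1; e3; (vbasis W)`_2; e5].
have X_span : (fullv <= <<X>>)%VS.
  rewrite -(addv_complf square) -/W subv_add sq_e35 !subv_add -!memvE.
  rewrite !memv_span ?inE ?eqxx ?orbT //=.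
  apply: subv_trans (subv_span_vbasis dimW) _; apply/span_subvP => v.
  by rewrite /= !inE => /or3P [] /eqP ->; apply: memv_span; rewrite !inE eqxx ?orbT.
have X_basis : basis_of fullv X.
  have spanX : <<X>>%VS = fullv by apply/eqP; rewrite eqEsubv subvf X_span.
  by rewrite /basis_of spanX eqxx /free spanX dimV size_tuple.
apply: (iso_twostep_of_basis mul_bil X_basis) => /=.
- by move=> i j; rewrite -sq_e35 mul_square.
- by move=> i; rewrite -cube_e5 mul_cubel.
- by move=> j; rewrite -cube_e5 mul_cuber.
- exact: e3e3.
- by move=> i; rewrite (ann _ _ e5_cube).1.
- by move=> j; rewrite (ann _ _ e5_cube).2.
Qed.

End FiveDimensional.

Unset Implicit Arguments.

Theorem theoremA (V : vectType CC) (mul : V -> V -> V) :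
  bilinear_prod mul ->
  \dim (fullv : {vspace V}) = 5%N ->
  nilpotent_alg mul ->
  binary_leibniz mul ->
  is_leibniz mul
  \/ iso_to mul B01 \/ iso_to mul B02 \/ iso_to mul B03 \/ iso_to mul B04
  \/ iso_to mul B05 \/ iso_to mul B06 \/ iso_to mul B07 \/ iso_to mul B08
  \/ (exists alpha : CC, iso_to mul (B09 alpha))
  \/ iso_to mul B10 \/ iso_to mul B11
  \/ (exists alpha : CC, iso_to mul (B12 alpha))
  \/ iso_to mul B13 \/ iso_to mul B14.
Proof.
move=> mul_bil dimV nil binL.
have [L | NL] := classic (is_leibniz mul); [by left | right].
have [C [D [p [q iso]]]] := twostep_model mul_bil nil binL dimV NL.
have [dxxz dxzz] := twostep_binary_defect iso binL.
have [defect0 | [m11 [m12 [m22 [v1 [v2 [s bc]]]]]]] := twostep_defect_cases D dxxz dxzz.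
  by case: NL; apply: twostep_leibniz iso defect0.
exact: normal_form_classification (iso_to_basis_change iso bc).
Qed.
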